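(* In the pure Call-by-Name $\lambda$-calculus with observation $\mathrm{obs}(M)={\downarrow}\{\omega(M)\}$ (as in the context), the parallel reduction $\rightsquigarrow_{pd}$ is an $\mathrm{obs}$-normalizing (multi-step) strategy for $\to_\beta$, and for every term $M$, $M\rightsquigarrow_{pd}^{\mathrm{obs}}\mathrm{BT}(M)$.
   Context: Pure $\lambda$-terms $M::=x\mid\lambda x.M\mid MM$; $\to_\beta$ is the closure of $(\lambda x.M)N\mapsto M\{N/x\}$ under all contexts. Head reduction $\to_h$ is the closure of $\beta$ under head contexts $H::=[\,]\mid\lambda x.H\mid HM$. Parallel reduction $\rightsquigarrow_{pd}$: if $M\to_hM'$ then $M\rightsquigarrow_{pd}M'$; if $M$ is $\beta$-normal then $M\rightsquigarrow_{pd}M$; otherwise ($M$ $\to_h$-normal but not $\beta$-normal) $\lambda x.P\rightsquigarrow_{pd}\lambda x.P'$ if $P\rightsquigarrow_{pd}P'$, and $P_1P_2\rightsquigarrow_{pd}P_1'P_2'$ if $P_1\rightsquigarrow_{pd}P_1'$ and $P_2\rightsquigarrow_{pd}P_2'$. Partial terms $P::=\Omega\mid x\mid PP\mid\lambda x.P$, preordered by the least reflexive-transitive relation $\le$ with $\Omega\le P$, $P_1P_2\le P_1'P_2'$ if $P_i\le P_i'$, $\lambda x.P\le\lambda x.P'$ if $P\le P'$. $\mathrm{PNF}$: $\Omega\in\mathrm{PNF}$, and $\lambda x_1\dots x_n.xA_1\dots A_m\in\mathrm{PNF}$ if all $A_i\in\mathrm{PNF}$. $\omega(M)=\Omega$ if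 $M$ is not a head normal form (a term $\lambda\vec x.xM_1\dots M_p$), and $\omega(\lambda\vec x.xM_1\dots M_p)=\lambda\vec x.x\,\omega(M_1)\dots\omega(M_p)$. ${\downarrow}\mathcal S=\{Q\in\mathrm{PNF}\mid Q\le S\text{ for some }S\in\mathcal S\}$; $\mathrm{BT}(M)=\bigcup_{M\to_\beta^*N}{\downarrow}\{\omega(N)\}$. $\mathrm{obs}$ takes values in the ideal completion of $\mathrm{PNF}$ (ordered by inclusion, suprema of chains are unions). For a relation $R$, $M\,R^{\mathrm{obs}}\,\mathbf r$ means there is a maximal $R$-sequence $(M_n)_n$ from $M$ (infinite, or finite ending in an $R$-normal term then continued constantly) with $\bigcup_n\mathrm{obs}(M_n)=\mathbf r$; $\mathrm{Lim}(M,R)$ is the set of such $\mathbf r$. A relation $R'$ is $\mathrm{obs}$-normalizing for $R$ if it is asymptotically complete (for all $M$, $M R^{\mathrm{obs}}\mathbf q$ implies $M R'^{\mathrm{obs}}\mathbf p$ for some $\mathbf p\supseteq\mathbf q$) and asymptotically uniform (for all $M$, every element of $\mathrm{Lim}(M,R')$ is maximal in $\mathrm{Lim}(M,R')$). *)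

From Stdlib Require Import Arith Relations.

Inductive term : Type :=
| Var : nat -> term
| Lam : term -> term
| App : term -> term -> term.

Fixpoint lift (n c : nat) (t : term) : term :=
  match t with
  | Var i => if Nat.leb c i then Var (i + n) else Var i
  | Lam t' => Lam (lift n (S c) t')
  | App t1 t2 => App (lift n c t1) (lift n c t2)
  end.

Fixpoint subst (k : nat) (u : term) (t : term) : term :=
  match t with
  | Var i => if Nat.eqb i k then lift k 0 u
             else if Nat.ltb k i then Var (pred i) else Var i
  | Lam t' => Lam (subst (S k) u t')
  | App t1 t2 => App (subst k u t1) (subst k u t2)
  end.

Inductive beta : term -> term -> Prop :=
| beta_root : forall M N, beta (App (Lam M) N) (subst 0 N M)
| beta_lam : forall M M', beta M M' -> beta (Lam M) (Lam M')
| beta_appl : forall M M' N, beta M M' -> beta (App M N) (App M' N)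
| beta_appr : forall M N N', beta N N' -> beta (App M N) (App M N').

Inductive hred : term -> term -> Prop :=
| hred_root : forall M N, hred (App (Lam M) N) (subst 0 N M)
| hred_lam : forall M M', hred M M' -> hred (Lam M) (Lam M')
| hred_appl : forall M M' N, hred M M' -> hred (App M N) (App M' N).

Definition normal (R : term -> term -> Prop) (M : term) : Prop :=
  ~ exists N, R M N.

Inductive pd : term -> term -> Prop :=
| pd_head : forall M M', hred M M' -> pd M M'
| pd_nf : forall M, normal beta M -> pd M M
| pd_lam : forall P P',
    normal hred (Lam P) -> ~ normal beta (Lam P) ->
    pd P P' -> pd (Lam P) (Lam P')
| pd_app : forall P1 P2 P1' P2',
    normal hred (App P1 P2) -> ~ normal beta (App P1 P2) ->
    pd P1 P1' -> pd P2 P2' -> pd (App P1 P2) (App P1' P2').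

Inductive pterm : Type :=
| POmega : pterm
| PVar : nat -> pterm
| PApp : pterm -> pterm -> pterm
| PLam : pterm -> pterm.

Inductive ple : pterm -> pterm -> Prop :=
| ple_refl : forall P, ple P P
| ple_trans : forall P Q S, ple P Q -> ple Q S -> ple P S
| ple_omega : forall P, ple POmega P
| ple_app : forall P1 P2 P1' P2', ple P1 P1' -> ple P2 P2' ->
    ple (PApp P1 P2) (PApp P1' P2')
| ple_lam : forall P P', ple P P' -> ple (PLam P) (PLam P').

(* PNF: Omega, and \x1..xn. x A1 .. Am with all Ai in PNF *)
Inductive pnf_neutral : pterm -> Prop :=
| pn_var : forall x, pnf_neutral (PVar x)
| pn_app : forall P A, pnf_neutral P -> pnf P -> pnf_neutral (PApp P A)
with pnf_lams : pterm -> Prop :=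
| pl_base : forall P, pnf_neutral P -> pnf_lams P
| pl_lam : forall P, pnf_lams P -> pnf_lams (PLam P)
with pnf : pterm -> Prop :=
| pnf_omega : pnf POmega
| pnf_hnf : forall P, pnf_lams P -> pnf P.

Fixpoint is_neutral (M : term) : bool :=
  match M with
  | Var _ => true
  | App M1 _ => is_neutral M1
  | Lam _ => false
  end.

Fixpoint is_hnf (M : term) : bool :=
  match M with
  | Lam M' => is_hnf M'
  | _ => is_neutral M
  end.

Fixpoint omega (M : term) : pterm :=
  match M with
  | Var x => PVar x
  | App M1 M2 => if is_neutral M1 then PApp (omega M1) (omega M2) else POmega
  | Lam M' => if is_hnf M' then PLam (omega M') else POmega
  end.

Definition pset := pterm -> Prop.

Definition subset (p q : pset) : Prop := forall Q, p Q -> q Q.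

Definition obs (M : term) : pset := fun Q => pnf Q /\ ple Q (omega M).

Definition BT (M : term) : pset :=
  fun Q => exists N, clos_refl_trans term beta M N /\ pnf Q /\ ple Q (omega N).

(* maximal R-sequence from M (finite ones are continued constantly
   after the R-normal last term) *)
Definition max_seq (R : term -> term -> Prop) (M : term) (f : nat -> term) : Prop :=
  f 0 = M /\
  forall n, R (f n) (f (S n)) \/ (normal R (f n) /\ f (S n) = f n).

Definition obs_lim (R : term -> term -> Prop) (M : term) (r : pset) : Prop :=
  exists f, max_seq R M f /\ (forall Q, r Q <-> exists n, obs (f n) Q).

Definition asymptotically_complete (R' R : term -> term -> Prop) : Prop :=
  forall M q, obs_lim R M q -> exists p, obs_lim R' M p /\ subset q p.

Definition asymptotically_uniform (R' : term -> term -> Prop) : Prop :=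
  forall M p, obs_lim R' M p ->
    forall r, obs_lim R' M r -> subset p r -> subset r p.

Definition obs_normalizing (R' R : term -> term -> Prop) : Prop :=
  asymptotically_complete R' R /\ asymptotically_uniform R'.

Definition multistep_strategy (R' R : term -> term -> Prop) : Prop :=
  forall M N, R' M N -> clos_refl_trans term R M N.

(* Every ~>pd step is a beta-multistep, so every ~>pd-limit of M is contained in BT(M),
   which in turn contains every beta-limit.  Conversely, let Q <= omega(N) be a partial normal
   form with M ->beta* N, and let (f n) be a ~>pd-sequence from M.  If Q is not Omega then N is
   a head normal form, so by the head normalization theorem M has a finite deterministic head
   reduction to a head normal form; every step of ~>pd outside head normal forms is a head step
   and shortens that reduction, so the sequence reaches a head normal form lam x. y A1 .. Ak.
   From then on ~>pd only reduces the A_i (or the body) in parallel, and by confluence they are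
   joinable with the corresponding subterms of N, so induction on Q shows that Q is eventually
   below omega(f n).  Hence every ~>pd-limit of M is exactly BT(M), which gives completeness
   and uniformity at once.  Confluence and head normalization are proved with Takahashi's
   parallel reductions. *)

From Stdlib Require Import Arith Relations Lia Classical IndefiniteDescription.

(** * De Bruijn indices *)

Ltac case_indices := repeat match goal with
  | |- context [Nat.leb ?a ?b] => destruct (Nat.leb_spec a b)
  | |- context [Nat.eqb ?a ?b] => destruct (Nat.eqb_spec a b)
  | |- context [Nat.ltb ?a ?b] => destruct (Nat.ltb_spec a b)
  end.

Ltac solve_indices :=
  repeat (cbn [lift subst]; case_indices);
  try (exfalso; lia); try reflexivity; try (f_equal; lia).

Lemma lift_lift u n m c p : p <= c ->
  lift n (m + c) (lift m p u) = lift m p (lift n c u).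
Proof.
  revert c p; induction u as [i|u IHu|u1 IHu1 u2 IHu2]; intros c p Hp; cbn [lift].
  - solve_indices.
  - f_equal. rewrite <- Nat.add_succ_r. apply IHu. lia.
  - f_equal; auto.
Qed.

Lemma lift_lift_fuse u n m c p : c <= p -> p <= c + m ->
  lift n p (lift m c u) = lift (n + m) c u.
Proof.
  revert c p; induction u as [i|u IHu|u1 IHu1 u2 IHu2]; intros c p H1 H2; cbn [lift].
  - solve_indices.
  - f_equal. apply IHu; lia.
  - f_equal; auto.
Qed.

Lemma lift_subst t k c u n :
  lift n (k + c) (subst k u t) = subst k (lift n c u) (lift n (S (k + c)) t).
Proof.
  revert k; induction t as [i|t IHt|t1 IHt1 t2 IHt2]; intros k; cbn [lift subst].
  - solve_indices. subst. apply lift_lift. lia.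
  - f_equal. apply (IHt (S k)).
  - f_equal; auto.
Qed.

Lemma subst_lift t j k c u : c <= k ->
  subst (j + k) u (lift j c t) = lift j c (subst k u t).
Proof.
  revert c k; induction t as [i|t IHt|t1 IHt1 t2 IHt2]; intros c k Hck; cbn [lift subst].
  - solve_indices. subst. rewrite lift_lift_fuse by lia. reflexivity.
  - f_equal. rewrite <- Nat.add_succ_r. apply IHt. lia.
  - f_equal; auto.
Qed.

Lemma subst_lift_cancel t j w m c : c <= j -> j <= c + m ->
  subst j w (lift (S m) c t) = lift m c t.
Proof.
  revert c j; induction t as [i|t IHt|t1 IHt1 t2 IHt2]; intros c j H1 H2; cbn [lift subst].
  - solve_indices.
  - f_equal. apply IHt; lia.
  - f_equal; auto.
Qed.

Lemma subst_subst t j k u v :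
  subst (j + k) u (subst j v t) = subst j (subst k u v) (subst (S (j + k)) u t).
Proof.
  revert j; induction t as [i|t IHt|t1 IHt1 t2 IHt2]; intros j; cbn [lift subst].
  - solve_indices; subst.
    + apply subst_lift. lia.
    + symmetry. apply subst_lift_cancel; lia.
  - f_equal. apply (IHt (S j)).
  - f_equal; auto.
Qed.

(** * Confluence *)

Notation betas := (clos_refl_trans term beta).

Lemma betas_lam A B : betas A B -> betas (Lam A) (Lam B).
Proof. induction 1; eauto using rt_step, rt_refl, rt_trans, beta. Qed.

Lemma betas_app A A' B B' : betas A A' -> betas B B' -> betas (App A B) (App A' B').
Proof.
  intros HA HB. apply rt_trans with (App A' B).
  - induction HA; eauto using rt_step, rt_refl, rt_trans, beta.
  - induction HB; eauto using rt_step, rt_refl, rt_trans, beta.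
Qed.

Inductive par : term -> term -> Prop :=
| par_var i : par (Var i) (Var i)
| par_lam A A' : par A A' -> par (Lam A) (Lam A')
| par_app A A' B B' : par A A' -> par B B' -> par (App A B) (App A' B')
| par_beta A A' B B' : par A A' -> par B B' -> par (App (Lam A) B) (subst 0 B' A').

Notation pars := (clos_refl_trans_1n term par).

Lemma par_refl M : par M M.
Proof. induction M; constructor; auto. Qed.

Lemma beta_par M N : beta M N -> par M N.
Proof. induction 1; constructor; auto using par_refl. Qed.

Lemma par_betas M N : par M N -> betas M N.
Proof.
  induction 1.
  - apply rt_refl.
  - apply betas_lam; auto.
  - apply betas_app; auto.
  - eapply rt_trans. { apply betas_app; [apply betas_lam|]; eauto. }
    apply rt_step, beta_root.
Qed.

Lemma par_lift A A' n c : par A A' -> par (lift n c A) (lift n c A').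
Proof.
  intros H; revert c; induction H; intros c; cbn [lift].
  - apply par_refl.
  - constructor; auto.
  - constructor; auto.
  - rewrite (lift_subst A' 0 c B' n : lift n c _ = _). apply par_beta; auto.
Qed.

Lemma par_subst A A' U U' k : par A A' -> par U U' -> par (subst k U A) (subst k U' A').
Proof.
  intros HA HU; revert k; induction HA; intros k; cbn [subst].
  - case_indices; auto using par_lift, par_refl.
  - constructor; auto.
  - constructor; auto.
  - rewrite (subst_subst A' 0 k U' B' : subst k _ _ = _). apply par_beta; auto.
Qed.

Fixpoint dev (t : term) : term :=
  match t with
  | Var i => Var i
  | Lam a => Lam (dev a)
  | App (Lam a) b => subst 0 (dev b) (dev a)
  | App a b => App (dev a) (dev b)
  end.

Lemma par_dev M N : par M N -> par N (dev M).
Proof.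
  induction 1; simpl.
  - constructor.
  - constructor; auto.
  - destruct A; try (constructor; auto).
    inversion H; subst. inversion IHpar1; subst. apply par_beta; auto.
  - apply par_subst; auto.
Qed.

Lemma pars_par_strip M N1 N2 : pars M N2 -> par M N1 -> exists Z, pars N1 Z /\ par N2 Z.
Proof.
  intros H; revert N1; induction H as [|M M' N2 HMM' _ IH]; intros N1 HN1.
  - exists N1. split; [constructor | auto].
  - destruct (IH (dev M) (par_dev _ _ HMM')) as [Z [HZ1 HZ2]].
    exists Z. split; auto. econstructor; [apply par_dev|]; eauto.
Qed.

Lemma pars_confluent M N1 N2 : pars M N1 -> pars M N2 -> exists Z, pars N1 Z /\ pars N2 Z.
Proof.
  intros H; revert N2; induction H as [|M M' N1 HMM' _ IH]; intros N2 HN2.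
  - exists N2. split; auto. constructor.
  - destruct (pars_par_strip _ _ _ HN2 HMM') as [W [HW1 HW2]].
    destruct (IH _ HW1) as [Z [HZ1 HZ2]].
    exists Z. split; auto. econstructor; eauto.
Qed.

Lemma betas_pars M N : betas M N -> pars M N.
Proof.
  intros H. apply clos_rt_rt1n in H.
  induction H; econstructor; eauto using beta_par.
Qed.

Lemma pars_betas M N : pars M N -> betas M N.
Proof. induction 1; eauto using rt_refl, rt_trans, par_betas. Qed.

Theorem betas_confluent M N1 N2 : betas M N1 -> betas M N2 ->
  exists Z, betas N1 Z /\ betas N2 Z.
Proof.
  intros H1 H2.
  destruct (pars_confluent M N1 N2 (betas_pars _ _ H1) (betas_pars _ _ H2)) as [Z [HZ1 HZ2]].
  exists Z. split; apply pars_betas; auto.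
Qed.

Lemma beta_neutral M M' : beta M M' -> is_neutral M = true -> is_neutral M' = true.
Proof. induction 1; simpl; auto; discriminate. Qed.

Lemma betas_neutral M M' : betas M M' -> is_neutral M = true -> is_neutral M' = true.
Proof. induction 1; eauto using beta_neutral. Qed.

Lemma neutral_hnf M : is_neutral M = true -> is_hnf M = true.
Proof. destruct M; simpl; auto; discriminate. Qed.

Lemma betas_hnf M M' : betas M M' -> is_hnf M = true -> is_hnf M' = true.
Proof.
  induction 1 as [M M' H| |]; eauto.
  induction H; simpl; auto; try discriminate. eauto using beta_neutral.
Qed.

Lemma betas_var_inv x Z : betas (Var x) Z -> Z = Var x.
Proof.
  intros H. apply clos_rt_rt1n in H.
  inversion H as [|y ? Hs]; [reflexivity | inversion Hs].
Qed.

Lemma betas_lam_inv A Z : betas (Lam A) Z -> exists Z', Z = Lam Z' /\ betas A Z'.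
Proof.
  intros H. apply clos_rt_rt1n in H. remember (Lam A) as M eqn:EM. revert A EM.
  induction H as [|M Y Z HMY _ IH]; intros A EM; subst.
  - exists A. split; [reflexivity | apply rt_refl].
  - inversion HMY as [| ? A' HA | |]; subst.
    destruct (IH A' eq_refl) as [Z' [EZ HZ]].
    exists Z'. split; [auto | eapply rt_trans; [apply rt_step|]; eauto].
Qed.

Lemma betas_app_inv A B Z : is_neutral A = true -> betas (App A B) Z ->
  exists Z1 Z2, Z = App Z1 Z2 /\ betas A Z1 /\ betas B Z2.
Proof.
  intros HA H. apply clos_rt_rt1n in H. remember (App A B) as M eqn:EM. revert A B HA EM.
  induction H as [|M Y Z HMY _ IH]; intros A B HA EM; subst.
  - exists A, B. split; [reflexivity | split; apply rt_refl].
  - inversion HMY as [A' ? | | ? A' ? HA' | ? ? B' HB']; subst; [discriminate| |].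
    + destruct (IH A' B (beta_neutral _ _ HA' HA) eq_refl) as [Z1 [Z2 [EZ [H1 H2]]]].
      exists Z1, Z2. split; [|split]; eauto using rt_step, rt_trans.
    + destruct (IH A B' HA eq_refl) as [Z1 [Z2 [EZ [H1 H2]]]].
      exists Z1, Z2. split; [|split]; eauto using rt_step, rt_trans.
Qed.

Definition joinable M N := exists Z, betas M Z /\ betas N Z.

Lemma joinable_sym M N : joinable M N -> joinable N M.
Proof. intros [Z [H1 H2]]. exists Z; auto. Qed.

Lemma joinable_betas_l M M' N : betas M M' -> joinable M N -> joinable M' N.
Proof.
  intros HM [Z [HMZ HNZ]].
  destruct (betas_confluent _ _ _ HM HMZ) as [W [HW1 HW2]].
  exists W. split; eauto using rt_trans.
Qed.

Lemma joinable_lam_inv A B : joinable (Lam A) (Lam B) -> joinable A B.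
Proof.
  intros [Z [HA HB]].
  destruct (betas_lam_inv _ _ HA) as [ZA [-> HA']].
  destruct (betas_lam_inv _ _ HB) as [ZB [EZ HB']]. injection EZ as <-.
  exists ZA; auto.
Qed.

Lemma joinable_app_inv A1 A2 B1 B2 : is_neutral A1 = true -> is_neutral B1 = true ->
  joinable (App A1 A2) (App B1 B2) -> joinable A1 B1 /\ joinable A2 B2.
Proof.
  intros HA HB [Z [HAZ HBZ]].
  destruct (betas_app_inv _ _ _ HA HAZ) as [Z1 [Z2 [-> [H1 H2]]]].
  destruct (betas_app_inv _ _ _ HB HBZ) as [Z1' [Z2' [EZ [H1' H2']]]].
  injection EZ as <- <-.
  split; [exists Z1 | exists Z2]; auto.
Qed.

Lemma joinable_lam_neutral A N : joinable (Lam A) N -> is_neutral N = true -> False.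
Proof.
  intros [Z [HA HN]] Hn.
  destruct (betas_lam_inv _ _ HA) as [Z' [-> _]].
  discriminate (betas_neutral _ _ HN Hn).
Qed.

Lemma hnf_joinable_var A x : is_hnf A = true -> joinable A (Var x) -> A = Var x.
Proof.
  intros HA HJ. destruct HJ as [Z [HAZ HxZ]]. rewrite (betas_var_inv _ _ HxZ) in HAZ.
  destruct A as [y|T|A1 A2].
  - rewrite (betas_var_inv _ _ HAZ). reflexivity.
  - destruct (betas_lam_inv _ _ HAZ) as [? [E _]]. discriminate.
  - destruct (betas_app_inv A1 A2 _ HA HAZ) as [? [? [E _]]]. discriminate.
Qed.

Lemma hnf_joinable_lam A N : is_hnf A = true -> joinable A (Lam N) -> exists T, A = Lam T.
Proof.
  intros HA HJ. destruct A as [y|T|A1 A2]; [| eauto |];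
    exfalso; exact (joinable_lam_neutral _ _ (joinable_sym _ _ HJ) HA).
Qed.

Lemma hnf_joinable_app A N1 N2 : is_hnf A = true -> is_neutral N1 = true ->
  joinable A (App N1 N2) -> exists A1 A2, A = App A1 A2 /\ is_neutral A1 = true.
Proof.
  intros HA HN HJ. destruct A as [y|T|A1 A2].
  - destruct HJ as [Z [HAZ HNZ]]. rewrite (betas_var_inv _ _ HAZ) in HNZ.
    destruct (betas_app_inv _ _ _ HN HNZ) as [? [? [E _]]]. discriminate.
  - exfalso. exact (joinable_lam_neutral _ _ HJ HN).
  - eauto.
Qed.

(** * Head normalization *)

Inductive whred : term -> term -> Prop :=
| whred_root M N : whred (App (Lam M) N) (subst 0 N M)
| whred_app M M' N : whred M M' -> whred (App M N) (App M' N).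

Notation whreds := (clos_refl_trans_1n term whred).

(* Parallel reduction that contracts no weak-head redex. *)
Inductive ipar : term -> term -> Prop :=
| ipar_var i : ipar (Var i) (Var i)
| ipar_lam T T' : par T T' -> ipar (Lam T) (Lam T')
| ipar_app A A' B B' : ipar A A' -> par B B' -> ipar (App A B) (App A' B').

Lemma whreds_trans A B C : whreds A B -> whreds B C -> whreds A C.
Proof. induction 1; intros; auto. econstructor; eauto. Qed.

Lemma whreds_lift A A' n c : whreds A A' -> whreds (lift n c A) (lift n c A').
Proof.
  induction 1 as [|A B C HAB _ IH]; [constructor|econstructor; [|exact IH]].
  clear IH; revert c; induction HAB; intros c; cbn [lift].
  - rewrite (lift_subst M 0 c N n : lift n c _ = _). constructor.
  - constructor; auto.
Qed.

Lemma whreds_subst A A' U k : whreds A A' -> whreds (subst k U A) (subst k U A').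
Proof.
  induction 1 as [|A B C HAB _ IH]; [constructor|econstructor; [|exact IH]].
  clear IH; revert k; induction HAB; intros k; cbn [subst].
  - rewrite (subst_subst M 0 k U N : subst k _ _ = _). constructor.
  - constructor; auto.
Qed.

Lemma whreds_app A A' B : whreds A A' -> whreds (App A B) (App A' B).
Proof. induction 1; econstructor; eauto using whred. Qed.

Lemma ipar_lift A A' n c : ipar A A' -> ipar (lift n c A) (lift n c A').
Proof.
  intros H; revert c; induction H; intros c; cbn [lift].
  - case_indices; constructor.
  - constructor; apply par_lift; auto.
  - constructor; auto using par_lift.
Qed.

Definition whred_ipar M N := exists P, whreds M P /\ ipar P N.

Lemma whred_ipar_subst A0 A' U U' k : ipar A0 A' -> whred_ipar U U' -> par U U' ->
  whred_ipar (subst k U A0) (subst k U' A').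
Proof.
  intros HA [U0 [HU1 HU2]] HU; revert k; induction HA; intros k; cbn [subst].
  - case_indices.
    + exists (lift k 0 U0). split; auto using whreds_lift, ipar_lift.
    + eexists; split; constructor.
    + eexists; split; constructor.
  - eexists; split; [constructor|]. constructor. apply par_subst; auto.
  - destruct (IHHA k) as [P1 [HP1 HP2]].
    exists (App P1 (subst k U B)). split.
    + apply whreds_app; auto.
    + constructor; auto using par_subst.
Qed.

Lemma par_whred_ipar M N : par M N -> whred_ipar M N.
Proof.
  induction 1 as [i|A A' HA _|A A' B B' _ [P1 [H1 H2]] HB _|A A' B B' _ [A0 [H1 H2]] HB IHB].
  - eexists; split; constructor.
  - eexists; split; constructor; auto.
  - exists (App P1 B). split; [apply whreds_app; auto | constructor; auto].
  - destruct (whred_ipar_subst _ _ _ _ 0 H2 IHB HB) as [P [HP1 HP2]].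
    exists P. split; auto.
    econstructor; [apply whred_root|]. eapply whreds_trans; [apply whreds_subst; eauto|auto].
Qed.

Lemma ipar_whred_postpone P N N' : ipar P N -> whred N N' ->
  exists P', whred P P' /\ par P' N'.
Proof.
  intros H; revert N'; induction H as [i|T T' _|A A' B B' HA IHA HB]; intros N' HN;
    inversion HN as [? ?|? A'' ? HA']; subst.
  - inversion HA; subst. exists (subst 0 B T). split; [constructor | apply par_subst; auto].
  - destruct (IHA _ HA') as [P'' [H1 H2]]. exists (App P'' B).
    split; constructor; auto.
Qed.

Definition whnf (M : term) : Prop := is_neutral M = true \/ exists T, M = Lam T.

Lemma ipar_whnf P N : ipar P N -> whnf N -> whnf P.
Proof.
  induction 1 as [i|T T' _|A A' B B' HA IHA _]; intros Hw.
  - left; reflexivity.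
  - right; eauto.
  - destruct Hw as [Hn | [T HT]]; [|discriminate]. left.
    destruct (IHA (or_introl Hn)) as [HA' | [T HT]]; [exact HA'|].
    subst. inversion HA; subst. discriminate.
Qed.

Lemma par_whreds_whnf M M1 P1 : par M M1 -> whreds M1 P1 -> whnf P1 ->
  exists P, whreds M P /\ whnf P.
Proof.
  intros Hp Hs; revert M Hp; induction Hs as [M1|M1 M2 P1 H12 _ IH]; intros M Hp Hw;
    destruct (par_whred_ipar _ _ Hp) as [P [H1 H2]].
  - exists P. split; eauto using ipar_whnf.
  - destruct (ipar_whred_postpone _ _ _ H2 H12) as [P' [H3 H4]].
    destruct (IH P' H4 Hw) as [P'' [H5 H6]].
    exists P''. split; auto. eapply whreds_trans; [eauto|econstructor; eauto].
Qed.

Theorem weak_head_normalization M N : betas M N -> whnf N -> exists P, whreds M P /\ whnf P.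
Proof.
  intros H. apply clos_rt_rt1n in H.
  induction H as [M|M M1 N H1 _ IH]; intros Hw.
  - exists M. split; [constructor | auto].
  - destruct (IH Hw) as [P1 [HP1 HP2]]. eapply par_whreds_whnf; eauto using beta_par.
Qed.

(* Deterministic head reduction; unlike [hred] it never reduces inside the function part of a
   head redex (lam x. A) B. *)
Inductive hstep : term -> term -> Prop :=
| hstep_whred M M' : whred M M' -> hstep M M'
| hstep_lam M M' : hstep M M' -> hstep (Lam M) (Lam M').

Inductive hsteps : nat -> term -> term -> Prop :=
| hsteps_refl M : hsteps 0 M M
| hsteps_cons n M M1 M2 : hstep M M1 -> hsteps n M1 M2 -> hsteps (S n) M M2.

Lemma hsteps_trans n m A B C : hsteps n A B -> hsteps m B C -> hsteps (n + m) A C.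
Proof. induction 1; intros; simpl; auto. econstructor; eauto. Qed.

Lemma hsteps_lam n A B : hsteps n A B -> hsteps n (Lam A) (Lam B).
Proof. induction 1; econstructor; eauto using hstep. Qed.

Lemma whreds_hsteps A B : whreds A B -> exists n, hsteps n A B.
Proof.
  induction 1 as [|A B C HAB _ [n Hn]]; [exists 0 | exists (S n)]; econstructor; eauto using hstep.
Qed.

Lemma whred_beta M N : whred M N -> beta M N.
Proof. induction 1; constructor; auto. Qed.

Lemma whreds_betas M N : whreds M N -> betas M N.
Proof. induction 1; eauto using rt_refl, rt_trans, rt_step, whred_beta. Qed.

Lemma head_normalization_neutral M N : joinable M N -> is_neutral N = true ->
  exists n H, hsteps n M H /\ is_hnf H = true.
Proof.
  intros [Z [HMZ HNZ]] HN.
  destruct (weak_head_normalization M Z HMZ (or_introl (betas_neutral _ _ HNZ HN)))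
    as [P [HMP [HP | [T ->]]]].
  - destruct (whreds_hsteps _ _ HMP) as [n Hn]. exists n, P. auto using neutral_hnf.
  - exfalso. apply (joinable_lam_neutral T N); auto.
    apply (joinable_betas_l M); [apply whreds_betas; auto | exists Z; auto].
Qed.

Theorem head_normalization N : is_hnf N = true -> forall M, joinable M N ->
  exists n H, hsteps n M H /\ is_hnf H = true.
Proof.
  induction N as [x|N IHN|N1 _ N2 _]; intros HN M HMN;
    [apply (head_normalization_neutral M (Var x)); auto| |
     apply (head_normalization_neutral M (App N1 N2)); auto].
  destruct HMN as [Z [HMZ HNZ]].
  destruct (betas_lam_inv _ _ HNZ) as [Z' [-> _]].
  destruct (weak_head_normalization M _ HMZ (or_intror (ex_intro _ Z' eq_refl)))
    as [P [HMP [HP | [T ->]]]].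
  - exfalso. apply (joinable_lam_neutral Z' P); auto.
    apply joinable_sym, (joinable_betas_l M); [apply whreds_betas; auto|].
    exists (Lam Z'); auto using rt_refl.
  - assert (HT : joinable T N).
    { apply joinable_lam_inv, (joinable_betas_l M); [apply whreds_betas; auto|].
      exists (Lam Z'); auto. }
    destruct (IHN HN T HT) as [m [H [HTH HH]]].
    destruct (whreds_hsteps _ _ HMP) as [n HMn].
    exists (n + m), (Lam H). split; [eapply hsteps_trans; eauto using hsteps_lam | auto].
Qed.

Lemma hred_beta M N : hred M N -> beta M N.
Proof. induction 1; constructor; auto. Qed.

Lemma hred_not_hnf M M' : hred M M' -> is_hnf M = true -> False.
Proof. induction 1; simpl; auto using neutral_hnf; discriminate. Qed.

Lemma hred_subst A A' U k : hred A A' -> hred (subst k U A) (subst k U A').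
Proof.
  intros H; revert k; induction H; intros k; cbn [subst].
  - rewrite (subst_subst M 0 k U N : subst k _ _ = _). constructor.
  - constructor; auto.
  - constructor; auto.
Qed.

Lemma whred_deterministic M M1 M2 : whred M M1 -> whred M M2 -> M1 = M2.
Proof.
  intros H; revert M2; induction H; intros M2 H2; inversion H2; subst; auto.
  - match goal with Hw : whred (Lam _) _ |- _ => inversion Hw end.
  - inversion H.
  - f_equal; auto.
Qed.

Lemma hred_app_lam X Y T : hred (App X Y) (Lam T) -> whred (App X Y) (Lam T).
Proof. intros H. inversion H; subst. apply whred_root. Qed.

Lemma hred_hstep_commute M M' M1 : hred M M' -> hstep M M1 ->
  M' = M1 \/ exists M'1, hstep M' M'1 /\ hred M1 M'1.
Proof.
  intros H; revert M1; induction H as [A B|A A' HA IH|A A' B HA IH]; intros M1 HS.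
  - inversion HS as [? ? HW|]; subst.
    inversion HW as [|? ? ? HW']; subst; [left; reflexivity | inversion HW'].
  - inversion HS as [? ? HW|? A1 HS']; subst; [inversion HW|].
    destruct (IH _ HS') as [-> | [M'1 [H1 H2]]]; [left; auto | right].
    exists (Lam M'1). split; [apply hstep_lam | apply hred_lam]; auto.
  - inversion HS as [? ? HW|]; subst. inversion HW as [A0 ?|? A1 ? HW1]; subst.
    + inversion HA as [| ? A0' HA0 |]; subst. right. exists (subst 0 B A0'). split.
      * do 2 constructor.
      * apply hred_subst; auto.
    + destruct (IH A1 (hstep_whred _ _ HW1)) as [-> | [M'2 [H2 H3]]]; [left; auto|].
      destruct A' as [y|T|B1 B2].
      * inversion H2 as [? ? HW2|]; inversion HW2.
      * (* A head step from an application to an abstraction contracts the head redex,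
           so it is the weak-head step [A -> A1] itself. *)
        left. assert (HW' : whred A (Lam T)) by (inversion HW1; subst; apply hred_app_lam; auto).
        rewrite (whred_deterministic _ _ _ HW' HW1). reflexivity.
      * right. exists (App M'2 B). split; [|apply hred_appl; auto].
        inversion H2; subst. apply hstep_whred, whred_app; auto.
Qed.

Lemma hsteps_hred_decrease n M H M' : hsteps n M H -> is_hnf H = true -> hred M M' ->
  exists n' H', n = S n' /\ hsteps n' M' H' /\ is_hnf H' = true.
Proof.
  intros Hs; revert M'; induction Hs as [M|n M M1 M2 HM HM1 IH]; intros M' HH HMM'.
  - exfalso; eapply hred_not_hnf; eauto.
  - destruct (hred_hstep_commute _ _ _ HMM' HM) as [-> | [M'1 [H2 H3]]].
    + exists n, M2. auto.
    + destruct (IH _ HH H3) as [n' [H' [-> [H4 H5]]]].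
      exists (S n'), H'. split; [reflexivity | split; [econstructor; eauto | auto]].
Qed.

(** * The parallel strategy *)

Lemma pd_betas M N : pd M N -> betas M N.
Proof.
  induction 1.
  - apply rt_step, hred_beta; auto.
  - apply rt_refl.
  - apply betas_lam; auto.
  - apply betas_app; auto.
Qed.

Lemma pd_total M : exists N, pd M N.
Proof.
  induction M as [x|M [M' HM]|M1 [M1' H1] M2 [M2' H2]].
  - exists (Var x). apply pd_nf. intros [N HN]. inversion HN.
  - destruct (classic (exists N, hred (Lam M) N)) as [[N HN]|Hh]; [eauto using pd|].
    destruct (classic (normal beta (Lam M))) as [Hb|Hb]; eauto using pd.
  - destruct (classic (exists N, hred (App M1 M2) N)) as [[N HN]|Hh]; [eauto using pd|].
    destruct (classic (normal beta (App M1 M2))) as [Hb|Hb]; eauto using pd.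
Qed.

Lemma hred_progress M : is_hnf M = false -> exists N, hred M N.
Proof.
  induction M as [x|M IH|[y|A|A1 A2] IH M2 _]; simpl; intros Hn; try discriminate.
  - destruct (IH Hn) as [N HN]. eauto using hred.
  - eauto using hred.
  - destruct (IH Hn) as [N HN]. eauto using hred.
Qed.

Lemma pd_not_hnf_hred M M' : is_hnf M = false -> pd M M' -> hred M M'.
Proof.
  intros Hn Hp. destruct (hred_progress M Hn) as [N HN].
  inversion Hp as [| ? Hb | ? ? Hh | ? ? ? ? Hh]; subst; auto; exfalso.
  - apply Hb. exists N. apply hred_beta; auto.
  - apply Hh; eauto.
  - apply Hh; eauto.
Qed.

Lemma normal_beta_lam A : normal beta (Lam A) -> normal beta A.
Proof. intros Hb [N HN]. apply Hb. eauto using beta. Qed.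

Lemma normal_beta_app A B : normal beta (App A B) -> normal beta A /\ normal beta B.
Proof. intros Hb. split; intros [N HN]; apply Hb; eauto using beta. Qed.

Lemma pd_neutral_app A B X : is_neutral A = true -> pd (App A B) X ->
  exists A' B', X = App A' B' /\ pd A A' /\ pd B B'.
Proof.
  intros Hn Hp. inversion Hp as [? ? Hh | ? Hb | | ? ? A' B' _ _ HA HB]; subst.
  - exfalso. exact (hred_not_hnf _ _ Hh Hn).
  - destruct (normal_beta_app _ _ Hb). exists A, B. auto using pd.
  - exists A', B'. auto.
Qed.

Lemma pd_hnf_lam A X : is_hnf A = true -> pd (Lam A) X -> exists A', X = Lam A' /\ pd A A'.
Proof.
  intros Hn Hp. inversion Hp as [? ? Hh | ? Hb | ? A' _ _ HA |]; subst.
  - exfalso. exact (hred_not_hnf _ _ Hh Hn).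
  - exists A. auto using pd, normal_beta_lam.
  - exists A'. auto.
Qed.

Definition pdseq (f : nat -> term) : Prop := forall k, pd (f k) (f (S k)).

Lemma pdseq_betas f i k : pdseq f -> i <= k -> betas (f i) (f k).
Proof.
  intros Hf. induction 1; [apply rt_refl | eapply rt_trans; eauto using pd_betas].
Qed.

Lemma pdseq_hsteps_hnf n f H : pdseq f -> hsteps n (f 0) H -> is_hnf H = true ->
  exists j, is_hnf (f j) = true.
Proof.
  revert f H; induction n as [|n IH]; intros f H Hf Hs HH.
  - inversion Hs; subst. exists 0; auto.
  - destruct (is_hnf (f 0)) eqn:E0; [exists 0; auto|].
    destruct (hsteps_hred_decrease _ _ _ _ Hs HH (pd_not_hnf_hred _ _ E0 (Hf 0)))
      as [n' [H' [En [Hs' HH']]]].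
    injection En as <-.
    destruct (IH (fun k => f (S k)) H' (fun k => Hf (S k)) Hs' HH') as [j Hj].
    exists (S j); auto.
Qed.

Lemma pdseq_reaches_hnf f N : pdseq f -> joinable (f 0) N -> is_hnf N = true ->
  exists j, is_hnf (f j) = true /\ joinable (f j) N.
Proof.
  intros Hf HJ HN.
  destruct (head_normalization N HN (f 0) HJ) as [n [H [Hs HH]]].
  destruct (pdseq_hsteps_hnf n f H Hf Hs HH) as [j Hj].
  exists j. split; auto.
  apply (joinable_betas_l (f 0)); auto. apply pdseq_betas; auto. apply Nat.le_0_l.
Qed.

Lemma pdseq_shift f j : pdseq f -> pdseq (fun k => f (j + k)).
Proof. intros Hf k. rewrite Nat.add_succ_r. apply Hf. Qed.

Lemma pdseq_keeps_neutral_app h A B : pdseq h -> h 0 = App A B -> is_neutral A = true ->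
  forall k, exists a b, h k = App a b /\ is_neutral a = true.
Proof.
  intros Hh E0 HA k. induction k as [|k [a [b [Ek Ha]]]]; [eauto|].
  pose proof (Hh k) as Hp. rewrite Ek in Hp.
  destruct (pd_neutral_app _ _ _ Ha Hp) as [a' [b' [-> [Ha' _]]]].
  exists a', b'. split; [auto | apply (betas_neutral a); auto using pd_betas].
Qed.

Lemma pdseq_keeps_hnf_lam h T : pdseq h -> h 0 = Lam T -> is_hnf T = true ->
  forall k, exists b, h k = Lam b /\ is_hnf b = true.
Proof.
  intros Hh E0 HT k. induction k as [|k [b [Ek Hb]]]; [eauto|].
  pose proof (Hh k) as Hp. rewrite Ek in Hp.
  destruct (pd_hnf_lam _ _ Hb Hp) as [b' [-> Hb']].
  exists b'. split; [auto | apply (betas_hnf b); auto using pd_betas].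
Qed.

Definition app_fun (t : term) : term := match t with App a _ => a | _ => t end.
Definition app_arg (t : term) : term := match t with App _ b => b | _ => t end.
Definition lam_body (t : term) : term := match t with Lam b => b | _ => t end.

Lemma pdseq_app_split h : pdseq h -> (forall k, exists a b, h k = App a b /\ is_neutral a = true) ->
  pdseq (fun k => app_fun (h k)) /\ pdseq (fun k => app_arg (h k)).
Proof.
  intros Hh Hshape.
  enough (H : forall k, pd (app_fun (h k)) (app_fun (h (S k))) /\
                        pd (app_arg (h k)) (app_arg (h (S k)))).
  { split; intros k; apply H. }
  intros k. destruct (Hshape k) as [a [b [Ek Ha]]].
  pose proof (Hh k) as Hp. rewrite Ek in Hp.
  destruct (pd_neutral_app _ _ _ Ha Hp) as [a' [b' [E' [H1 H2]]]].
  rewrite Ek, E'. auto.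
Qed.

Lemma pdseq_lam_body h : pdseq h -> (forall k, exists b, h k = Lam b /\ is_hnf b = true) ->
  pdseq (fun k => lam_body (h k)).
Proof.
  intros Hh Hshape k. destruct (Hshape k) as [b [Ek Hb]].
  pose proof (Hh k) as Hp. rewrite Ek in Hp.
  destruct (pd_hnf_lam _ _ Hb Hp) as [b' [E' H']].
  rewrite Ek, E'. auto.
Qed.

(** * Observations along the strategy *)

(* A syntax-directed presentation of [ple], convenient for inversion. *)
Inductive sle : pterm -> pterm -> Prop :=
| sle_omega P : sle POmega P
| sle_var x : sle (PVar x) (PVar x)
| sle_app P1 P2 Q1 Q2 : sle P1 Q1 -> sle P2 Q2 -> sle (PApp P1 P2) (PApp Q1 Q2)
| sle_lam P Q : sle P Q -> sle (PLam P) (PLam Q).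

Lemma sle_refl P : sle P P.
Proof. induction P; constructor; auto. Qed.

Lemma sle_trans P Q S : sle P Q -> sle Q S -> sle P S.
Proof.
  intros H; revert S; induction H; intros S HS; inversion HS; subst; constructor; auto.
Qed.

Lemma ple_iff_sle P Q : ple P Q <-> sle P Q.
Proof.
  split; induction 1; eauto using sle_refl, sle_trans, sle, ple.
Qed.

Lemma omega_beta_mono M M' : beta M M' -> sle (omega M) (omega M').
Proof.
  induction 1 as [M N|M M' H IH|M M' N H IH|M N N' H IH]; simpl.
  - constructor.
  - destruct (is_hnf M) eqn:E; [rewrite (betas_hnf M M') by auto using rt_step|];
      constructor; auto.
  - destruct (is_neutral M) eqn:E; [rewrite (beta_neutral _ _ H E)|];
      constructor; auto using sle_refl.
  - destruct (is_neutral M); constructor; auto using sle_refl.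
Qed.

Lemma omega_betas_mono M M' Q : betas M M' -> sle Q (omega M) -> sle Q (omega M').
Proof. intros H; revert Q; induction H; eauto using sle_trans, omega_beta_mono. Qed.

Lemma pdseq_omega_mono f i k Q : pdseq f -> i <= k -> sle Q (omega (f i)) -> sle Q (omega (f k)).
Proof. eauto using omega_betas_mono, pdseq_betas. Qed.

Lemma sle_omega_var x N : sle (PVar x) (omega N) -> N = Var x.
Proof.
  destruct N as [y|T|N1 N2]; simpl; [|destruct (is_hnf T)|destruct (is_neutral N1)];
    inversion 1; auto.
Qed.

Lemma sle_omega_lam Q N : sle (PLam Q) (omega N) ->
  exists N', N = Lam N' /\ is_hnf N' = true /\ sle Q (omega N').
Proof.
  destruct N as [y|T|N1 N2]; simpl; [|destruct (is_hnf T) eqn:E|destruct (is_neutral N1)];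
    inversion 1; eauto.
Qed.

Lemma sle_omega_app Q1 Q2 N : sle (PApp Q1 Q2) (omega N) ->
  exists N1 N2, N = App N1 N2 /\ is_neutral N1 = true /\
    sle Q1 (omega N1) /\ sle Q2 (omega N2).
Proof.
  destruct N as [y|T|N1 N2]; simpl; [|destruct (is_hnf T)|destruct (is_neutral N1) eqn:E];
    inversion 1; eauto 7.
Qed.

(* Stated with [joinable] rather than [betas (f 0) N] so that the induction on [Q] passes to the
   subterms of head normal forms. *)
Definition eventually_observed (Q : pterm) : Prop :=
  forall f N, pdseq f -> joinable (f 0) N -> sle Q (omega N) -> exists n, sle Q (omega (f n)).

Lemma eventually_observed_var x : eventually_observed (PVar x).
Proof.
  intros f N Hf HJ HQ. rewrite (sle_omega_var _ _ HQ) in HJ.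
  destruct (pdseq_reaches_hnf f (Var x) Hf HJ eq_refl) as [j [Hj HJj]].
  exists j. rewrite (hnf_joinable_var _ _ Hj HJj). constructor.
Qed.

Lemma eventually_observed_lam Q : eventually_observed Q -> eventually_observed (PLam Q).
Proof.
  intros IH f N Hf HJ HQ. destruct (sle_omega_lam _ _ HQ) as [N' [-> [HN' HQ']]].
  destruct (pdseq_reaches_hnf f (Lam N') Hf HJ HN') as [j [Hj HJj]].
  destruct (hnf_joinable_lam _ _ Hj HJj) as [T Ej].
  set (h := fun k => f (j + k)).
  assert (Hh : pdseq h) by (apply pdseq_shift; auto).
  assert (E0 : h 0 = Lam T) by (unfold h; rewrite Nat.add_0_r; auto).
  rewrite Ej in Hj, HJj. apply joinable_lam_inv in HJj.
  pose proof (pdseq_keeps_hnf_lam h T Hh E0 Hj) as Hshape.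
  destruct (IH _ N' (pdseq_lam_body h Hh Hshape) ltac:(cbv beta; rewrite E0; exact HJj) HQ')
    as [n Hn].
  exists (j + n). change (f (j + n)) with (h n).
  destruct (Hshape n) as [b [Eb Hb]].
  rewrite Eb in Hn |- *. simpl in *. rewrite Hb. constructor; auto.
Qed.

Lemma eventually_observed_app Q1 Q2 : eventually_observed Q1 -> eventually_observed Q2 ->
  eventually_observed (PApp Q1 Q2).
Proof.
  intros IH1 IH2 f N Hf HJ HQ.
  destruct (sle_omega_app _ _ _ HQ) as [N1 [N2 [-> [HN1 [HQ1 HQ2]]]]].
  destruct (pdseq_reaches_hnf f (App N1 N2) Hf HJ HN1) as [j [Hj HJj]].
  destruct (hnf_joinable_app _ _ _ Hj HN1 HJj) as [T1 [T2 [Ej HT1]]].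
  set (h := fun k => f (j + k)).
  assert (Hh : pdseq h) by (apply pdseq_shift; auto).
  assert (E0 : h 0 = App T1 T2) by (unfold h; rewrite Nat.add_0_r; auto).
  rewrite Ej in HJj.
  destruct (joinable_app_inv T1 T2 N1 N2 HT1 HN1 HJj) as [HJ1 HJ2].
  pose proof (pdseq_keeps_neutral_app h T1 T2 Hh E0 HT1) as Hshape.
  destruct (pdseq_app_split h Hh Hshape) as [Hg1 Hg2].
  destruct (IH1 _ N1 Hg1 ltac:(cbv beta; rewrite E0; exact HJ1) HQ1) as [n1 Hn1].
  destruct (IH2 _ N2 Hg2 ltac:(cbv beta; rewrite E0; exact HJ2) HQ2) as [n2 Hn2].
  exists (j + (n1 + n2)). change (f (j + (n1 + n2))) with (h (n1 + n2)).
  apply (pdseq_omega_mono _ n1 (n1 + n2) Q1 Hg1 ltac:(lia)) in Hn1.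
  apply (pdseq_omega_mono _ n2 (n1 + n2) Q2 Hg2 ltac:(lia)) in Hn2.
  destruct (Hshape (n1 + n2)) as [a [b [Eab Ha]]].
  rewrite Eab in Hn1, Hn2 |- *. simpl in *. rewrite Ha. constructor; auto.
Qed.

Lemma eventually_observed_all Q : eventually_observed Q.
Proof.
  induction Q.
  - intros f N _ _ _. exists 0. constructor.
  - apply eventually_observed_var.
  - apply eventually_observed_app; auto.
  - apply eventually_observed_lam; auto.
Qed.

Lemma max_seq_pd_pdseq M f : max_seq pd M f -> pdseq f.
Proof.
  intros [_ Hf] k. destruct (Hf k) as [H | [Hn _]]; auto.
  exfalso. apply Hn, pd_total.
Qed.

Lemma max_seq_betas R M f : (forall A B, R A B -> betas A B) -> max_seq R M f ->
  forall n, betas M (f n).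
Proof.
  intros HR [H0 Hf] n. induction n as [|n IH]; [rewrite H0; apply rt_refl|].
  destruct (Hf n) as [H | [_ ->]]; eauto using rt_trans.
Qed.

Lemma pd_limit_BT M f : max_seq pd M f -> forall Q, BT M Q <-> exists n, obs (f n) Q.
Proof.
  intros Hm Q. pose proof (max_seq_pd_pdseq _ _ Hm) as Hf.
  split.
  - intros [N [HMN [Hp Hl]]]. destruct Hm as [H0 _].
    apply ple_iff_sle in Hl.
    destruct (eventually_observed_all Q f N Hf ltac:(rewrite H0; exists N; auto using rt_refl) Hl)
      as [n Hn].
    exists n. split; [auto | apply ple_iff_sle; auto].
  - intros [n [Hp Hl]]. exists (f n). split; [|auto].
    apply (max_seq_betas pd); auto using pd_betas.
Qed.

Lemma pd_max_seq_exists M : exists f, max_seq pd M f.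
Proof.
  destruct (functional_choice pd pd_total) as [step Hstep].
  exists (fun n => Nat.iter n step M). split; [reflexivity | left; apply Hstep].
Qed.

Theorem mainTheorem18 :
  multistep_strategy pd beta /\
  obs_normalizing pd beta /\
  (forall M : term, obs_lim pd M (BT M)).
Proof.
  assert (HBT : forall M, obs_lim pd M (BT M)).
  { intros M. destruct (pd_max_seq_exists M) as [f Hf].
    exists f. split; [exact Hf | apply pd_limit_BT; exact Hf]. }
  split; [exact pd_betas | split; [split | exact HBT]].
  - intros M q [f [Hf Hq]]. exists (BT M). split; [apply HBT|].
    intros Q HQ. apply Hq in HQ as [n HQ]. exists (f n).
    split; [apply (max_seq_betas beta M f); auto using rt_step | exact HQ].
  - intros M p [f [Hf Hp]] r [g [Hg Hr]] _ Q HQ.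
    apply Hp, (pd_limit_BT M f Hf), (pd_limit_BT M g Hg), Hr, HQ.
Qed.
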